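(* Let $\mathcal{Q}$ be a small involutive quantaloid and $\mathbb{A}$ a symmetric $\mathcal{Q}$-category. The following are equivalent: (1) $\mathbb{A}$ is symmetrically complete, i.e. for every symmetric $\mathcal{Q}$-category $\mathbb{B}$, the map $F\mapsto\mathbb{A}(-,F-)$ from the ordered set of functors $\mathbb{B}\to\mathbb{A}$ to the ordered set of symmetric left adjoint distributors $\mathbb{B}\to\mathbb{A}$ is an equivalence; (2) for every symmetric $\mathcal{Q}$-category $\mathbb{B}$, every symmetric left adjoint distributor $\Phi\colon\mathbb{B}\to\mathbb{A}$ is representable; (3) for every $X\in\mathcal{Q}_0$, every symmetric left adjoint presheaf $\phi\colon *_X\to\mathbb{A}$ is representable.
   Context: A quantaloid is a category enriched in $\mathsf{Sup}$; an involution is an identity-on-objects, direction-reversing, monotone map $f\mapsto f^{\mathsf o}$ on morphisms with $(g\circ f)^{\mathsf o}=f^{\mathsf o}\circ g^{\mathsf o}$, $f^{\mathsf{oo}}=f$. A $\mathcal{Q}$-category $\mathbb{A}$: objects $\mathbb{A}_0$ with types $tx$, homs $\mathbb{A}(y,x)\colon tx\to ty$ with $\mathbb{A}(z,y)\circ\mathbb{A}(y,x)\le\mathbb{A}(z,x)$, $1_{tx}\le\mathbb{A}(x,x)$; symmetric if $\mathbb{A}(x,y)=\mathbb{A}(y,x)^{\mathsf o}$. A functor $F\colon\mathbb{B}\to\mathbb{A}$ is a type-preserving object map with $\mathbb{B}(y,x)\le\mathbb{A}(Fy,Fx)$; functors are preordered by $F\le G$ iff $1_{tx}\le\mathbb{A}(Fx,Gx)$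 for all $x$. A distributor $\Phi\colon\mathbb{B}\to\mathbb{A}$: arrows $\Phi(a,b)\colon tb\to ta$ with $\mathbb{A}(a',a)\circ\Phi(a,b)\le\Phi(a',b)$ and $\Phi(a,b)\circ\mathbb{B}(b,b')\le\Phi(a,b')$; composition $(\Psi\otimes\Phi)(z,x)=\bigvee_y\Psi(z,y)\circ\Phi(y,x)$, identities the hom-families, elementwise order. $\Phi$ is a left adjoint with right adjoint $\Phi^*$ if $\mathbb{B}\le\Phi^*\otimes\Phi$, $\Phi\otimes\Phi^*\le\mathbb{A}$. For symmetric $\mathbb{A},\mathbb{B}$, $\Phi^{\mathsf o}\colon\mathbb{A}\to\mathbb{B}$ is $\Phi^{\mathsf o}(b,a)=\Phi(a,b)^{\mathsf o}$, and $\Phi$ is a symmetric left adjoint if it is left adjoint to $\Phi^{\mathsf o}$. $\Phi$ is representable if $\Phi=\mathbb{A}(-,F-)$ (elements $\mathbb{A}(a,Fb)$) for some functor $F$. $*_X$ is the one-object $\mathcal{Q}$-category of type $X$ with hom $1_X$; a presheaf is a distributor $*_X\to\mathbb{A}$. *)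

Set Implicit Arguments.
Unset Strict Implicit.

Record Quantaloid := {
  qObj : Type;
  qHom : qObj -> qObj -> Type;
  qle : forall X Y, qHom X Y -> qHom X Y -> Prop;
  qsup : forall X Y, (qHom X Y -> Prop) -> qHom X Y;
  qcomp : forall X Y Z, qHom Y Z -> qHom X Y -> qHom X Z;
  qid : forall X, qHom X X;
  qle_refl : forall X Y (f : qHom X Y), qle f f;
  qle_trans : forall X Y (f g h : qHom X Y), qle f g -> qle g h -> qle f h;
  qle_antisym : forall X Y (f g : qHom X Y), qle f g -> qle g f -> f = g;
  qsup_ub : forall X Y (S : qHom X Y -> Prop) f, S f -> qle f (qsup S);
  qsup_least : forall X Y (S : qHom X Y -> Prop) g,
      (forall f, S f -> qle f g) -> qle (qsup S) g;
  qcomp_assoc : forall W X Y Z (h : qHom Y Z) (g : qHom X Y) (f : qHom W X),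
      qcomp h (qcomp g f) = qcomp (qcomp h g) f;
  qcomp_id_l : forall X Y (f : qHom X Y), qcomp (qid Y) f = f;
  qcomp_id_r : forall X Y (f : qHom X Y), qcomp f (qid X) = f;
  qcomp_sup_l : forall X Y Z (g : qHom Y Z) (S : qHom X Y -> Prop),
      qcomp g (qsup S) = qsup (fun h => exists f, S f /\ h = qcomp g f);
  qcomp_sup_r : forall X Y Z (S : qHom Y Z -> Prop) (f : qHom X Y),
      qcomp (qsup S) f = qsup (fun h => exists g, S g /\ h = qcomp g f)
}.

Arguments qHom {q} _ _.
Arguments qle {q X Y} _ _.
Arguments qsup {q X Y} _.
Arguments qcomp {q X Y Z} _ _.
Arguments qid {q} _.

Record InvQuantaloid := {
  iq :> Quantaloid;
  qinv : forall X Y : qObj iq, qHom X Y -> qHom Y X;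
  qinv_mono : forall X Y (f g : qHom X Y), qle f g -> qle (qinv f) (qinv g);
  qinv_comp : forall X Y Z (g : qHom Y Z) (f : qHom X Y),
      qinv (qcomp g f) = qcomp (qinv f) (qinv g);
  qinv_inv : forall X Y (f : qHom X Y), qinv (qinv f) = f
}.

Arguments qinv {i X Y} _.

Record QCat (Q : Quantaloid) := {
  cob : Type;
  cty : cob -> qObj Q;
  chom : forall y x : cob, qHom (cty x) (cty y);
  chom_comp : forall z y x, qle (qcomp (chom z y) (chom y x)) (chom z x);
  chom_id : forall x, qle (qid (cty x)) (chom x x)
}.

Arguments cob {Q} _.
Arguments cty {Q} _ _.
Arguments chom {Q} _ _ _.

Definition symmetric (Q : InvQuantaloid) (A : QCat Q) : Prop :=
  forall x y : cob A, chom A x y = qinv (chom A y x).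

Definition hcast (Q : Quantaloid) (X Y X' Y' : qObj Q)
  (e1 : X = X') (e2 : Y = Y') (f : qHom X Y) : qHom X' Y' :=
  eq_rect Y (fun Y0 => qHom X' Y0)
    (eq_rect X (fun X0 => qHom X0 Y) f X' e1) Y' e2.

Record QFunctor (Q : Quantaloid) (B A : QCat Q) := {
  fob : cob B -> cob A;
  fty : forall x, cty A (fob x) = cty B x;
  fhom : forall y x,
      qle (chom B y x) (hcast (fty x) (fty y) (chom A (fob y) (fob x)))
}.

Arguments fob {Q B A} _ _.
Arguments fty {Q B A} _ _.

Definition fle (Q : Quantaloid) (B A : QCat Q) (F G : QFunctor B A) : Prop :=
  forall x : cob B,
    qle (qid (cty B x)) (hcast (fty G x) (fty F x) (chom A (fob F x) (fob G x))).

Definition DistT (Q : Quantaloid) (B A : QCat Q) : Type :=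
  forall (a : cob A) (b : cob B), qHom (cty B b) (cty A a).

Definition is_dist (Q : Quantaloid) (B A : QCat Q) (Phi : DistT B A) : Prop :=
  (forall a' a b, qle (qcomp (chom A a' a) (Phi a b)) (Phi a' b)) /\
  (forall a b b', qle (qcomp (Phi a b) (chom B b b')) (Phi a b')).

Definition dcomp (Q : Quantaloid) (B A C : QCat Q)
  (Psi : DistT A C) (Phi : DistT B A) : DistT B C :=
  fun z x => qsup (fun h => exists y : cob A, h = qcomp (Psi z y) (Phi y x)).

Definition did (Q : Quantaloid) (A : QCat Q) : DistT A A := fun a a' => chom A a a'.

Arguments did {Q} A _ _.

Definition dle (Q : Quantaloid) (B A : QCat Q) (Phi Psi : DistT B A) : Prop :=
  forall a b, qle (Phi a b) (Psi a b).

Definition left_adjoint (Q : Quantaloid) (B A : QCat Q)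
  (Phi : DistT B A) (Phistar : DistT A B) : Prop :=
  is_dist Phi /\ is_dist Phistar /\
  dle (did B) (dcomp Phistar Phi) /\ dle (dcomp Phi Phistar) (did A).

Definition dual (Q : InvQuantaloid) (B A : QCat Q) (Phi : DistT B A) : DistT A B :=
  fun b a => qinv (Phi a b).

Definition sym_left_adjoint (Q : InvQuantaloid) (B A : QCat Q) (Phi : DistT B A)
  : Prop := left_adjoint Phi (dual Phi).

Definition repr (Q : Quantaloid) (B A : QCat Q) (F : QFunctor B A) : DistT B A :=
  fun a b => hcast (fty F b) eq_refl (chom A a (fob F b)).

Definition representable (Q : Quantaloid) (B A : QCat Q) (Phi : DistT B A) : Prop :=
  exists F : QFunctor B A, forall a b, Phi a b = repr F a b.

Lemma star_comp (Q : Quantaloid) (X : qObj Q) :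
  forall (_ _ _ : unit), qle (qcomp (qid X) (qid X)) (qid X).
Proof. intros. rewrite qcomp_id_l. apply qle_refl. Qed.

Lemma star_id (Q : Quantaloid) (X : qObj Q) :
  forall (_ : unit), qle (qid X) (qid X).
Proof. intros. apply qle_refl. Qed.

Definition star (Q : Quantaloid) (X : qObj Q) : QCat Q :=
  {| cob := unit; cty := fun _ => X; chom := fun _ _ => qid X;
     chom_comp := star_comp X; chom_id := star_id X |}.

(** * Equivalence of preordered sets, for a map f : P -> R landing in the
    sub-ordered set S of R (with the induced order). *)
Definition preorder_equiv_onto (P R : Type) (leP : P -> P -> Prop)
  (leR : R -> R -> Prop) (S : R -> Prop) (f : P -> R) : Prop :=
  exists _ : (forall p, S (f p)),
  (forall p q, leP p q -> leR (f p) (f q)) /\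
  exists g : forall r, S r -> P,
    (forall r (hr : S r) s (hs : S s), leR r s -> leP (g r hr) (g s hs)) /\
    (forall p (hp : S (f p)), leP p (g (f p) hp) /\ leP (g (f p) hp) p) /\
    (forall r (hr : S r), leR r (f (g r hr)) /\ leR (f (g r hr)) r).

Definition sym_complete (Q : InvQuantaloid) (A : QCat Q) : Prop :=
  forall B : QCat Q, symmetric B ->
    preorder_equiv_onto (@fle Q B A) (@dle Q B A) (@sym_left_adjoint Q B A)
      (@repr Q B A).

From Stdlib Require Import ClassicalEpsilon.
Set Implicit Arguments.
Unset Strict Implicit.

(* (1) => (2): the inverse of the equivalence F |-> A(-,F-) picks a representing
   functor.  (2) => (1): A(-,F-) is always a symmetric left adjoint, the map
   F |-> A(-,F-) reflects the order (evaluate at (Fx, x) and use 1 <= A(Fx,Fx)),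
   and a chosen representing functor inverts it.  (2) => (3) because *_X is
   symmetric.  (3) => (2): for a symmetric left adjoint Phi : B -> A each column
   Phi(-,b) is a symmetric left adjoint presheaf, hence Phi(-,b) = A(-,Fb) for
   some object Fb; the unit B <= Phi^o (x) Phi together with the symmetry of A
   gives B(y,x) <= \/_a A(Fy,a) o A(a,Fx) <= A(Fy,Fx), so b |-> Fb is a functor. *)

Section Casts.
Variable Q : Quantaloid.

Lemma hcast_le (X Y X' Y' : qObj Q) (e1 : X = X') (e2 : Y = Y') (f g : qHom X Y) :
  qle f g -> qle (hcast e1 e2 f) (hcast e1 e2 g).
Proof. destruct e1, e2; auto. Qed.

Lemma hcast_comp (X Y Z X' Y' Z' : qObj Q) (e1 : X = X') (e2 : Y = Y') (e3 : Z = Z')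
  (g : qHom Y Z) (f : qHom X Y) :
  qcomp (hcast e2 e3 g) (hcast e1 e2 f) = hcast e1 e3 (qcomp g f).
Proof. destruct e1, e2, e3; reflexivity. Qed.

Lemma hcast_id (X X' : qObj Q) (e : X = X') : hcast e e (qid X) = qid X'.
Proof. destruct e; reflexivity. Qed.

Lemma hcast_cod_dom (X Y X' Y' : qObj Q) (e1 : X = X') (e2 : Y = Y') (f : qHom X Y) :
  hcast eq_refl e2 (hcast e1 eq_refl f) = hcast e1 e2 f.
Proof. destruct e1, e2; reflexivity. Qed.

End Casts.

Lemma hcast_qinv (Q : InvQuantaloid) (X Y X' Y' : qObj Q) (e1 : X = X') (e2 : Y = Y')
  (f : qHom X Y) : qinv (hcast e1 e2 f) = hcast e2 e1 (qinv f).
Proof. destruct e1, e2; reflexivity. Qed.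

Section Quantaloid_order.
Variable Q : Quantaloid.

Lemma qsup_pair_of_le (X Y : qObj Q) (f f' : qHom X Y) :
  qle f f' -> f' = qsup (fun h => h = f \/ h = f').
Proof.
  intros Hff'. apply qle_antisym.
  - apply qsup_ub; auto.
  - apply qsup_least; intros h [-> | ->]; auto using qle_refl.
Qed.

(* Composition is monotone because it preserves binary sups. *)
Lemma qcomp_le_r (X Y Z : qObj Q) (g : qHom Y Z) (f f' : qHom X Y) :
  qle f f' -> qle (qcomp g f) (qcomp g f').
Proof.
  intros Hff'. rewrite (qsup_pair_of_le Hff'), qcomp_sup_l.
  apply qsup_ub. exists f; auto.
Qed.

Lemma qcomp_le_l (X Y Z : qObj Q) (g g' : qHom Y Z) (f : qHom X Y) :
  qle g g' -> qle (qcomp g f) (qcomp g' f).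
Proof.
  intros Hgg'. rewrite (qsup_pair_of_le Hgg'), qcomp_sup_r.
  apply qsup_ub. exists g; auto.
Qed.

End Quantaloid_order.

Lemma qinv_id (Q : InvQuantaloid) (X : qObj Q) : qinv (qid X) = qid X.
Proof.
  transitivity (qcomp (qinv (qid X)) (qinv (qinv (qid X)))).
  - rewrite qinv_inv, qcomp_id_r. reflexivity.
  - rewrite <- qinv_comp, qcomp_id_r. apply qinv_inv.
Qed.

Lemma star_symmetric (Q : InvQuantaloid) (X : qObj Q) : symmetric (star X).
Proof. intros x y. symmetry. apply qinv_id. Qed.

Section Representable.
Variable Q : InvQuantaloid.
Variables B A : QCat Q.
Hypothesis hA : symmetric A.

Lemma repr_is_dist (F : QFunctor B A) : is_dist (repr F).
Proof.
  unfold repr; split.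
  - intros a' a b. change (chom A a' a) with (hcast eq_refl eq_refl (chom A a' a)).
    rewrite hcast_comp. apply hcast_le, chom_comp.
  - intros a b b'. eapply qle_trans; [apply qcomp_le_r, (fhom F b b')|].
    rewrite hcast_comp. apply hcast_le, chom_comp.
Qed.

Lemma dual_repr (F : QFunctor B A) b a :
  dual (repr F) b a = hcast eq_refl (fty F b) (chom A (fob F b) a).
Proof. unfold dual, repr. rewrite hcast_qinv, <- hA. reflexivity. Qed.

Lemma dual_repr_is_dist (F : QFunctor B A) : is_dist (dual (repr F)).
Proof.
  split.
  - intros b' b a. rewrite !dual_repr.
    eapply qle_trans; [apply qcomp_le_l, (fhom F b' b)|].
    rewrite hcast_comp. apply hcast_le, chom_comp.
  - intros b a a''. rewrite !dual_repr.
    change (chom A a a'') with (hcast eq_refl eq_refl (chom A a a'')).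
    rewrite hcast_comp. apply hcast_le, chom_comp.
Qed.

Lemma repr_sym_left_adjoint (F : QFunctor B A) : sym_left_adjoint (repr F).
Proof.
  split; [apply repr_is_dist|]. split; [apply dual_repr_is_dist|]. split.
  - intros b b'. unfold did, dcomp.
    eapply qle_trans; [|apply qsup_ub; exists (fob F b); reflexivity].
    rewrite dual_repr. unfold repr. rewrite hcast_comp.
    eapply qle_trans; [apply (fhom F b b')|]. apply hcast_le.
    rewrite <- (qcomp_id_l (chom A (fob F b) (fob F b'))) at 1.
    apply qcomp_le_l, chom_id.
  - intros a a'. unfold did, dcomp. apply qsup_least. intros h [b ->].
    rewrite dual_repr. unfold repr. rewrite hcast_comp. apply chom_comp.
Qed.

Lemma repr_le (F G : QFunctor B A) : fle F G -> dle (repr F) (repr G).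
Proof.
  intros HFG a b. unfold repr.
  rewrite <- (qcomp_id_r (hcast (fty F b) eq_refl (chom A a (fob F b)))).
  eapply qle_trans; [apply qcomp_le_r, (HFG b)|].
  rewrite hcast_comp. apply hcast_le, chom_comp.
Qed.

Lemma fle_of_repr_le (F G : QFunctor B A) : dle (repr F) (repr G) -> fle F G.
Proof.
  intros HFG x. specialize (HFG (fob F x) x). unfold repr in HFG.
  apply (hcast_le eq_refl (fty F x)) in HFG. rewrite !hcast_cod_dom in HFG.
  eapply qle_trans; [|exact HFG].
  rewrite <- (hcast_id (fty F x)). apply hcast_le, chom_id.
Qed.

Lemma representable_of_sym_complete :
  sym_complete A -> symmetric B ->
  forall Phi : DistT B A, sym_left_adjoint Phi -> representable Phi.
Proof.
  intros Hcomplete hB Phi hPhi.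
  destruct (Hcomplete B hB) as [_ [_ [g [_ [_ Hcounit]]]]].
  exists (g Phi hPhi). intros a b. destruct (Hcounit Phi hPhi) as [Hle Hge].
  apply qle_antisym; [apply Hle | apply Hge].
Qed.

Lemma repr_equiv_onto_of_representable :
  (forall Phi : DistT B A, sym_left_adjoint Phi -> representable Phi) ->
  preorder_equiv_onto (@fle Q B A) (@dle Q B A) (@sym_left_adjoint Q B A)
    (@repr Q B A).
Proof.
  intros Hrepr.
  pose (rep Phi hPhi := constructive_indefinite_description _ (Hrepr Phi hPhi)).
  assert (Hrep : forall Phi hPhi a b, repr (proj1_sig (rep Phi hPhi)) a b = Phi a b).
  { intros Phi hPhi a b. destruct (rep Phi hPhi) as [F HF]. symmetry. apply HF. }
  exists repr_sym_left_adjoint. split; [apply repr_le|].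
  exists (fun Phi hPhi => proj1_sig (rep Phi hPhi)). split; [|split].
  - intros Phi hPhi Psi hPsi HPhiPsi. apply fle_of_repr_le.
    intros a b. rewrite !Hrep. apply HPhiPsi.
  - intros F hF. split; apply fle_of_repr_le; intros a b; rewrite Hrep; apply qle_refl.
  - intros Phi hPhi. split; intros a b; rewrite Hrep; apply qle_refl.
Qed.

End Representable.

Section Columns.
Variable Q : InvQuantaloid.
Variables B A : QCat Q.
Variable Phi : DistT B A.
Hypothesis hPhi : sym_left_adjoint Phi.

Definition column (b : cob B) : DistT (star (cty B b)) A := fun a _ => Phi a b.
Arguments column : clear implicits.

Lemma column_sym_left_adjoint (b : cob B) : sym_left_adjoint (column b).
Proof.
  destruct hPhi as [[Phi_l _] [[_ dual_r] [Hunit Hcounit]]].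
  unfold column. split; [|split; [|split]].
  - split.
    + intros a' a u. apply Phi_l.
    + intros a u u'. simpl. rewrite qcomp_id_r. apply qle_refl.
  - split.
    + intros u' u a. simpl. unfold dual. rewrite qcomp_id_l. apply qle_refl.
    + intros u a a''. apply (dual_r b a a'').
  - intros u u'. simpl. eapply qle_trans; [apply (chom_id b)|]. apply (Hunit b b).
  - intros a a'. apply qsup_least. intros h [u ->].
    eapply qle_trans; [|apply (Hcounit a a')].
    apply qsup_ub. exists b. reflexivity.
Qed.

Hypothesis hA : symmetric A.

Lemma representable_of_columns :
  (forall b, representable (column b)) -> representable Phi.
Proof.
  intros Hcol.
  pose (Fb b := proj1_sig (constructive_indefinite_description _ (Hcol b))).
  assert (HFb : forall b a, Phi a b = repr (Fb b) a tt).
  { intros b a. exact (proj2_sig (constructive_indefinite_description _ (Hcol b)) a tt). }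
  assert (Fhom : forall y x : cob B,
    qle (chom B y x) (hcast (fty (Fb x) tt) (fty (Fb y) tt)
                       (chom A (fob (Fb y) tt) (fob (Fb x) tt)))).
  { intros y x. destruct hPhi as [_ [_ [Hunit _]]].
    eapply qle_trans; [apply (Hunit y x)|].
    apply qsup_least. intros h [a ->]. unfold dual.
    rewrite (HFb y a), (HFb x a). unfold repr.
    rewrite hcast_qinv, <- hA, hcast_comp. apply hcast_le, chom_comp. }
  exists {| fob b := fob (Fb b) tt; fty b := fty (Fb b) tt; fhom := Fhom |}.
  intros a b. apply HFb.
Qed.

End Columns.

Theorem proposition3p2 (Q : InvQuantaloid) (A : QCat Q) (hA : symmetric A) :
  (sym_complete A <->
   (forall B : QCat Q, symmetric B ->
      forall Phi : DistT B A, sym_left_adjoint Phi -> representable Phi)) /\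
  ((forall B : QCat Q, symmetric B ->
      forall Phi : DistT B A, sym_left_adjoint Phi -> representable Phi) <->
   (forall (X : qObj Q) (phi : DistT (star X) A),
      sym_left_adjoint phi -> representable phi)).
Proof.
  split; split.
  - intros Hcomplete B hB. exact (representable_of_sym_complete Hcomplete hB).
  - intros Hrepr B hB. apply repr_equiv_onto_of_representable; auto.
  - intros Hrepr X. apply Hrepr, star_symmetric.
  - intros Hpresheaf B _ Phi hPhi. apply representable_of_columns; auto.
    intro b. apply Hpresheaf, column_sym_left_adjoint, hPhi.
Qed.
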